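(* Let $n\ge2$, let $G=W(P_n)$, and let $q$ be an integer with $2\le q\le\lfloor n/2\rfloor+1$. If $N$ is a matching of $P_n$ with $|N|=q-1$, then \[ \operatorname{reg}\big(I(G^N)\big)\le 2+\Big\lfloor\frac{n-q}{2}\Big\rfloor. \]
   Context: $P_n$ is the path with vertices $x_1,\dots,x_n$ and edges $\{x_i,x_{i+1}\}$; $W(P_n)$ adds vertices $y_1,\dots,y_n$ and whiskers $\{x_i,y_i\}$. $I(H)$ denotes the edge ideal and $\operatorname{reg}$ the Castelnuovo–Mumford regularity. Even-connection: for a matching $N=\{e_1,\dots,e_p\}$ of a graph $G$ and $u,v\in V(G)$, $u\sim_N v$ if there are $r\ge1$ and vertices $p_0=u,p_1,\dots,p_{2r+1}=v$ with consecutive vertices adjacent in $G$, each $\{p_{2k+1},p_{2k+2}\}$ ($0\le k\le r-1$) an edge of $N$, and each edge of $N$ used at most once in this way. $G^N$ is the graph on $V(G)\setminus\operatorname{Supp}(N)$ where $u,v$ are adjacent iff $\{u,v\}\in E(G)$ or $u\sim_N v$. *)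

From HB Require Import structures.
From mathcomp Require Import all_boot all_order all_algebra.
From mathcomp Require Import boolp.
Set Implicit Arguments. Unset Strict Implicit. Unset Printing Implicit Defensive.
Import GRing.Theory.

(* Edges are represented as two-element sets {set V}.                       *)

Definition suppN (V : finType) (N : {set {set V}}) : {set V} :=
  \bigcup_(e in N) e.

Definition is_matching (V : finType) (E : V -> V -> Prop) (N : {set {set V}}) :=
  (forall e, e \in N -> exists u v, E u v /\ e = [set u; v]) /\
  (forall e f, e \in N -> f \in N -> e != f -> [disjoint e & f]).

Definition even_connected (V : finType) (E : V -> V -> Prop)
    (N : {set {set V}}) (u v : V) : Prop :=
  exists (r : nat) (p : nat -> V),
    [/\ (1 <= r)%N, p 0%N = u, p (2 * r + 1)%N = v &
        (forall i, (i < 2 * r + 1)%N -> E (p i) (p i.+1))] /\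
    [/\ (forall k, (k < r)%N -> [set p (2 * k + 1)%N; p (2 * k + 2)%N] \in N) &
        (forall k l, (k < r)%N -> (l < r)%N ->
           [set p (2 * k + 1)%N; p (2 * k + 2)%N] =
           [set p (2 * l + 1)%N; p (2 * l + 2)%N] -> k = l)].

Definition GN_vertex (V : finType) (N : {set {set V}}) : finType :=
  {x : V | x \notin suppN N}.

Definition GN_adj (V : finType) (E : V -> V -> Prop) (N : {set {set V}})
    (u v : GN_vertex N) : Prop :=
  val u <> val v /\ (E (val u) (val v) \/ even_connected E N (val u) (val v)).

(* The whisker graph W(P_n).  Vertex (i, false) is x_{i+1}, vertex          *)
(* (i, true) is y_{i+1}, for i : 'I_n.                                      *)
Definition WP_vertex (n : nat) : finType := ('I_n * bool)%type.

Definition path_adj (n : nat) (a b : WP_vertex n) : Prop :=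
  a.2 = false /\ b.2 = false /\ (a.1.+1 = b.1 \/ b.1.+1 = a.1)%N.

Definition WP_adj (n : nat) (a b : WP_vertex n) : Prop :=
  path_adj a b \/ (a.1 = b.1 /\ a.2 <> b.2).

(* For a graph H with vertex type V, I(H) = (x_u x_v : {u,v} in E(H)) in    *)
(* S = K[x_v : v in V].  We compute the N^V-graded Betti numbers            *)
(*   beta_{i,a}(I) = dim_K Tor_i^S(I, K)_a = dim_K Tor_{i+1}^S(S/I, K)_a     *)
(* via the Koszul complex K(x; S/I), which resolves K and whose multidegree *)
(* a component has as K-basis the e_F (x) x^(a - 1_F) with |F| = i,         *)
(* F subset supp(a) and x^(a-1_F) a standard monomial (not in I).           *)
Section EdgeIdealBetti.
Variables (K : fieldType) (V : finType) (E : V -> V -> Prop).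

(* the monomial x^b lies in the monomial ideal I(H) *)
Definition mono_in_edge_ideal (b : V -> nat) : bool :=
  `[< exists u v, E u v /\ (0 < b u)%N /\ (0 < b v)%N >].

Definition msupp (a : {ffun V -> nat}) : {set V} := [set v | (0 < a v)%N].

Definition koszul_basis (i : nat) (a : {ffun V -> nat}) : {set {set V}} :=
  [set F : {set V} | [&& #|F| == i, F \subset msupp a &
                         ~~ mono_in_edge_ideal (fun v => a v - (v \in F))]].

(* sign (-1)^{#{g in F : g < f}} where F \ G = {f} *)
Definition ksign (F G : {set V}) : K :=
  (-1)%R ^+ #|[set p : V * V | [&& p.1 \in F, p.2 \in F :\: G &
                                (enum_rank p.1 < enum_rank p.2)%N]]|.

(* matrix (row-vector convention) of the Koszul differential
   K_{i+1}(x; S/I)_a -> K_i(x; S/I)_a *)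
Definition koszul_diff (i : nat) (a : {ffun V -> nat}) :
    'M[K]_(#|koszul_basis i.+1 a|, #|koszul_basis i a|) :=
  \matrix_(r, c)
    (let F : {set V} := enum_val (A := koszul_basis i.+1 a) r in
     let G : {set V} := enum_val (A := koszul_basis i a) c in
     if (G \subset F) && (#|F :\: G| == 1%N) then ksign F G else 0%R).

(* dim_K H_i(K(x; S/I))_a = dim_K Tor_i^S(S/I, K)_a *)
Definition koszul_hdim (i : nat) (a : {ffun V -> nat}) : nat :=
  (#|koszul_basis i a| - (if i is i'.+1 then \rank (koszul_diff i' a) else 0)
     - \rank (koszul_diff i a))%N.

Definition edge_ideal_mbetti (i : nat) (a : {ffun V -> nat}) : nat :=
  koszul_hdim i.+1 a.

(* reg(I(H)) <= B, i.e. beta_{i,j}(I(H)) != 0 implies j - i <= B, where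
   beta_{i,j} = sum_{|a| = j} beta_{i,a}. *)
Definition edge_ideal_reg_le (B : nat) : Prop :=
  forall (i : nat) (a : {ffun V -> nat}),
    edge_ideal_mbetti i a != 0%N -> (\sum_(v : V) a v <= i + B)%N.

End EdgeIdealBetti.

(* In a squarefree multidegree A, the Koszul complex of S/I(H) has as basis
   the faces F of A whose complement A \ F is independent; non-squarefree
   multidegrees give cones and carry no homology.  Splitting the faces at a
   vertex v into those containing v and those avoiding v (which then contain
   all neighbours of v) gives reg(H) <= max(reg(H - v), reg(H - N[v]) + 1),
   and an isolated vertex again makes the complex a cone.

   In G^N for G = W(P_n) the surviving vertices are the leaves y_i and the x_j
   not covered by N, and two of them are even-connected exactly when they hang
   off the two ends of a run x_l x_(l+1), ..., x_(l+2t-2) x_(l+2t-1) of matching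
   edges.  Sweeping the positions from left to right, one splits at y_k when
   x_k x_(k+1) is in N, splits at x_k when x_k is uncovered, and otherwise
   deletes an isolated leaf.  Each split costs 1 and uses up at least two
   positions that are not left ends of matching edges, so reg <= 1 + ceil(u/2)
   with u = n - |N| = n - q + 1 such positions. *)

From mathcomp Require Import all_boot all_order all_algebra.
From mathcomp Require Import boolp zify.
Set Implicit Arguments. Unset Strict Implicit. Unset Printing Implicit Defensive.
Import GRing.Theory.

Section KoszulMatrix.
Variables (K : fieldType) (V : finType).
Implicit Types (F G : {set V}) (R C : {set {set V}}).
Local Open Scope ring_scope.

Definition koszul_coef F G : K :=
  if (G \subset F) && (#|F :\: G| == 1%N) then ksign K F G else 0.

Definition koszul_mx R C : 'M[K]_(#|R|, #|C|) :=
  \matrix_(r, c) koszul_coef (enum_val r) (enum_val c).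

Definition koszul_rank R C : nat := \rank (koszul_mx R C).

Definition sub_index R' R (sRR' : R' \subset R) (j : 'I_#|R'|) : 'I_#|R| :=
  enum_rank_in (subsetP sRR' _ (enum_valP j)) (enum_val j).

Lemma sub_indexK R' R (sRR' : R' \subset R) j :
  enum_val (sub_index sRR' j) = enum_val j.
Proof. by rewrite enum_rankK_in // (subsetP sRR') // enum_valP. Qed.

Lemma koszul_coef_neq0 F G : G \subset F -> #|F :\: G| = 1%N -> koszul_coef F G != 0.
Proof.
by move=> sGF dGF; rewrite /koszul_coef sGF dGF eqxx expf_neq0 // oppr_eq0 oner_eq0.
Qed.

Lemma koszul_coef_eq0 F G : ~~ (G \subset F) -> koszul_coef F G = 0.
Proof. by move=> nsGF; rewrite /koszul_coef (negbTE nsGF). Qed.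

Lemma mxrank_mxsub m n m' n' (f : 'I_m' -> 'I_m) (g : 'I_n' -> 'I_n)
    (A : 'M[K]_(m, n)) :
  (\rank (mxsub f g A) <= \rank A)%N.
Proof.
have -> : mxsub f g A = rowsub f 1%:M *m A *m colsub g 1%:M.
  by apply/matrixP => i j; rewrite mulmx_colsub mul_rowsub_mx mulmx1 mul1mx !mxE.
by rewrite (leq_trans (mxrankM_maxl _ _)) ?mxrankM_maxr.
Qed.

Lemma koszul_mx_sub R' R C' C (sRR' : R' \subset R) (sCC' : C' \subset C) :
  koszul_mx R' C' = mxsub (sub_index sRR') (sub_index sCC') (koszul_mx R C).
Proof. by apply/matrixP => i j; rewrite !mxE !sub_indexK. Qed.

Lemma koszul_rank_sub R' R C' C :
  R' \subset R -> C' \subset C -> (koszul_rank R' C' <= koszul_rank R C)%N.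
Proof. by move=> sRR' sCC'; rewrite /koszul_rank (koszul_mx_sub sRR' sCC') mxrank_mxsub. Qed.

Lemma koszul_rank_blockU R1 R2 C1 C2 :
  (forall F G, F \in R1 -> G \in C2 -> koszul_coef F G = 0) ->
  (koszul_rank R1 C1 + koszul_rank R2 C2 <= koszul_rank (R1 :|: R2) (C1 :|: C2))%N.
Proof.
move=> R1C2_0.
have [sR1 sR2] := (subsetUl R1 R2, subsetUr R1 R2).
have [sC1 sC2] := (subsetUl C1 C2, subsetUr C1 C2).
rewrite /koszul_rank; set M := koszul_mx (R1 :|: R2) (C1 :|: C2).
pose P := colsub (sub_index sC2) (1%:M : 'M[K]_#|C1 :|: C2|).
rewrite -(mxrank_mul_ker M P) [X in (_ <= X)%N]addnC leq_add //.
  have -> : koszul_mx R1 C1 = colsub (sub_index sC1) (rowsub (sub_index sR1) M).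
    by apply/matrixP => i j; rewrite !mxE !sub_indexK.
  apply: leq_trans (mxrank_mxsub id (sub_index sC1) (rowsub (sub_index sR1) M)) _.
  apply: mxrankS.
  rewrite sub_capmx rowsub_sub; apply/sub_kermxP.
  rewrite mulmx_colsub mulmx1; apply/matrixP => i j.
  by rewrite /M !mxE !sub_indexK R1C2_0 ?enum_valP.
rewrite /P mulmx_colsub mulmx1.
have -> : colsub (sub_index sC2) M = koszul_mx (R1 :|: R2) C2.
  by apply/matrixP => i j; rewrite !mxE sub_indexK.
exact: koszul_rank_sub.
Qed.

Lemma card_le_koszul_rank R C R' (g : {set V} -> {set V}) :
  R' \subset R -> (forall F, F \in R' -> g F \in C) ->
  (forall F, F \in R' -> koszul_coef F (g F) != 0) ->
  (forall F F', F \in R' -> F' \in R' -> F != F' -> koszul_coef F' (g F) = 0) ->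
  (#|R'| <= koszul_rank R C)%N.
Proof.
move=> sRR' gC diag offdiag.
pose h j := enum_rank_in (gC _ (enum_valP j)) (g (enum_val (A := R') j)).
pose d := \row_j koszul_coef (enum_val (A := R') j) (g (enum_val j)).
have -> : #|R'| = \rank (diag_mx d).
  rewrite mxrank_unit // unitmxE det_diag unitfE prodf_seq_neq0.
  by apply/allP => j _; rewrite mxE diag ?enum_valP.
have -> : diag_mx d = mxsub (sub_index sRR') h (koszul_mx R C).
  apply/matrixP => i j; rewrite !mxE sub_indexK enum_rankK_in ?gC ?enum_valP //.
  have [<-|ne] := eqVneq i j; first by rewrite mulr1n.
  by rewrite mulr0n offdiag ?enum_valP // (inj_eq enum_val_inj) eq_sym.
exact: mxrank_mxsub.
Qed.

Definition khdim (X : nat -> {set {set V}}) (m : nat) : nat :=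
  (#|X m| - (if m is m'.+1 then koszul_rank (X m) (X m') else 0)
     - koszul_rank (X m.+1) (X m))%N.

End KoszulMatrix.

Section Cone.
Variables (K : fieldType) (V : finType).
Implicit Types (F G : {set V}) (m : nat).

Lemma khdim_cone (X : nat -> {set {set V}}) (t : V) :
  (forall m F, F \in X m -> #|F| = m) ->
  (forall m F, t \notin F -> (F \in X m) = (t |: F \in X m.+1)) ->
  forall m, khdim K X m = 0.
Proof.
move=> cardX coneX.
pose T m := [set F in X m | t \in F]; pose S m := [set F in X m | t \notin F].
have cardTS m : #|X m| = #|T m| + #|S m|.
  rewrite -(cardsID [set F : {set V} | t \in F] (X m)); congr (_ + _); apply: eq_card => F;
  by rewrite !inE andbC.
have TS m : #|T m.+1| = #|S m|.
  have -> : T m.+1 = [set t |: F | F in S m].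
    apply/setP => F; rewrite inE; apply/andP/imsetP => [[FX tF]|[G]].
      by exists (F :\ t); rewrite ?setD1K // in_set setD11 andbT coneX ?setD11 ?setD1K.
    by rewrite inE => /andP[GX tG] ->; rewrite -coneX // setU11.
  apply: card_in_imset => F G; rewrite !inE => /andP[_ tF] /andP[_ tG] eFG.
  by rewrite -(setU1K tF) -(setU1K tG) eFG.
have rankT m : #|T m.+1| <= koszul_rank K (X m.+1) (X m).
  apply: (@card_le_koszul_rank _ _ _ _ _ (fun F => F :\ t)).
  - by apply/subsetP => F; rewrite inE => /andP[].
  - by move=> F; rewrite inE => /andP[FX tF]; rewrite coneX ?setD11 ?setD1K.
  - move=> F; rewrite inE => /andP[FX tF]; apply: koszul_coef_neq0; first exact: subsetDl.
    by rewrite cardsDS ?subsetDl // (cardsD1 t F) tF addnK.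
  move=> F F'; rewrite !inE => /andP[FX tF] /andP[F'X tF'] neFF'.
  apply: koszul_coef_eq0; apply: contra neFF' => sFF'.
  rewrite eqEcard (cardX _ _ FX) (cardX _ _ F'X) leqnn andbT.
  by rewrite -(setD1K tF) subUset sub1set tF'.
have T0 : T 0 = set0.
  by apply/setP => F; rewrite !inE; apply/negbTE/andP => -[/cardX/cards0_eq->]; rewrite inE.
case=> [|m]; rewrite /khdim ?cardTS.
  by have := rankT 0; rewrite T0 cards0 TS; lia.
by have := rankT m.+1; have := rankT m; rewrite !TS; lia.
Qed.

Lemma khdim_leU (X A B : nat -> {set {set V}}) (v : V) :
  (forall m, X m = B m :|: A m) -> (forall m F, F \in A m -> v \in F) ->
  (forall m F, F \in B m -> v \notin F) ->
  forall m, khdim K X m <= khdim K A m + khdim K B m.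
Proof.
move=> XBA vA vB.
have rankX m : koszul_rank K (B m.+1) (B m) + koszul_rank K (A m.+1) (A m) <=
               koszul_rank K (X m.+1) (X m).
  rewrite !XBA; apply: koszul_rank_blockU => F G FB GA; apply: koszul_coef_eq0.
  by apply: contraNN (vB _ _ FB) => /subsetP; apply; apply: vA GA.
have cardX m : #|X m| = #|B m| + #|A m|.
  rewrite XBA cardsU disjoint_setI0 ?cards0 ?subn0 // disjoints_subset.
  by apply/subsetP => F /vB; rewrite inE; apply: contra; apply: vA.
case=> [|m]; rewrite /khdim cardX; first by have := rankX 0; lia.
by have := rankX m; have := rankX m.+1; lia.
Qed.

End Cone.

Section VertexSplitting.
Variables (K : fieldType) (V : finType) (E : V -> V -> Prop).
Implicit Types (s S Z F : {set V}) (u v w t : V) (m b : nat).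

Definition edgeb u w : bool := `[< E u w >].

Definition stable S : bool := [forall u in S, forall w in S, ~~ edgeb u w].

Definition nbhd s v : {set V} := [set w in s | edgeb v w || edgeb w v].

(* Up to signs, the Koszul complex of the subgraph induced on [s], shifted by
   [#|Z|]: every face contains the forced set [Z].  Forcing keeps both halves of
   a vertex split in this family, with [v] forced in one half and its
   neighbours in the other. *)
Definition koszul_faces s Z m : {set {set V}} :=
  [set F : {set V} | [&& Z \subset F, F \subset s :|: Z, #|F| == m & stable (s :\: F)]].

Definition reg_bounded s b : Prop :=
  forall Z m, [disjoint s & Z] -> khdim K (koszul_faces s Z) m != 0 ->
    #|s| + #|Z| <= m + b.

Lemma stableP S : reflect (forall u w, u \in S -> w \in S -> ~~ edgeb u w) (stable S).
Proof.
apply: (iffP forallP) => [h u w uS wS|h u].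
  by move: (h u); rewrite uS => /forallP /(_ w); rewrite wS.
by apply/implyP => uS; apply/forallP => w; apply/implyP; apply: h.
Qed.

Lemma stableS S1 S2 : S1 \subset S2 -> stable S2 -> stable S1.
Proof.
move=> /subsetP sS12 /stableP st2; apply/stableP => u w uS wS.
by apply: st2; apply: sS12.
Qed.

Lemma stableU1 S t : ~~ edgeb t t -> nbhd S t = set0 -> stable (t |: S) = stable S.
Proof.
move=> ntt /setP nbS; apply/idP/idP; first by apply: stableS; apply: subsetU1.
have nadj w : w \in S -> ~~ edgeb t w && ~~ edgeb w t.
  by move=> wS; move: (nbS w); rewrite !inE wS /= -negb_or => ->.
move/stableP=> stS; apply/stableP => u w /setU1P[->|uS] /setU1P[->|wS] //.
- by case/andP: (nadj w wS).
- by case/andP: (nadj u uS).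
exact: stS.
Qed.

Lemma nbhd_sub s v : nbhd s v \subset s.
Proof. by apply/subsetP => w; rewrite inE => /andP[]. Qed.

Lemma nbhdS s1 s2 v : s1 \subset s2 -> nbhd s1 v \subset nbhd s2 v.
Proof. by move=> /subsetP s12; apply/subsetP => w; rewrite !inE => /andP[/s12-> ->]. Qed.

Lemma reg_bounded_le s b b' : b <= b' -> reg_bounded s b -> reg_bounded s b'.
Proof. by move=> lebb' hs Z m dsZ nz; have := hs Z m dsZ nz; lia. Qed.

Lemma reg_bounded_set0 b : reg_bounded set0 b.
Proof.
move=> Z m _ nz; rewrite cards0 add0n.
have /card_gt0P[F] : 0 < #|koszul_faces set0 Z m|.
  by rewrite lt0n; apply: contra nz; rewrite /khdim => /eqP->.
rewrite inE => /and4P[sZF _ /eqP <- _].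
by rewrite (leq_trans (subset_leq_card sZF)) ?leq_addr.
Qed.

Lemma reg_bounded_isolated s b t : t \in s -> nbhd s t = set0 -> reg_bounded s b.
Proof.
move=> ts nbt Z m dsZ; rewrite (@khdim_cone _ _ _ t) ?eqxx // => [k F|k F tF].
  by rewrite inE => /and4P[_ _ /eqP-> _].
have ntt : ~~ edgeb t t by apply: contra_eqN nbt => ett; apply/set0Pn; exists t;
  rewrite inE ts ett.
have tZ : t \notin Z by rewrite (disjointFr dsZ ts).
rewrite !inE cardsU1 tF add1n eqSS subUset sub1set !inE ts /=.
have -> : (Z \subset t |: F) = (Z \subset F).
  apply/idP/idP => [/subsetP sZ|/subset_trans->//]; last exact: subsetU1.
  by apply/subsetP => x xZ; move/setU1P: (sZ x xZ) => [xt|//]; rewrite -xt xZ in tZ.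
have -> : s :\: F = t |: (s :\: (t |: F)).
  by apply/setP => x; rewrite !inE; case: (eqVneq x t) => [->|]; rewrite ?ts ?tF.
rewrite stableU1 //; apply/eqP; rewrite -subset0 -nbt.
by apply: nbhdS; apply: subsetDl.
Qed.

Lemma mem_koszul_faces_in s Z m v F : v \in s -> v \in F ->
  (F \in koszul_faces s Z m) = (F \in koszul_faces (s :\ v) (v |: Z) m).
Proof.
move=> vs vF; rewrite !inE subUset sub1set vF /= setDDl.
have -> : v |: F = F by apply/setUidPr; rewrite sub1set.
by rewrite setUCA setUA setD1K.
Qed.

Lemma mem_koszul_faces_out s Z m v F :
  v \in s -> v \notin Z -> ~~ edgeb v v -> v \notin F ->
  (F \in koszul_faces s Z m) =
  (F \in koszul_faces (s :\: (v |: nbhd s v)) (Z :|: nbhd s v) m).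
Proof.
move=> vs vZ nvv vF; set Nv := nbhd s v; rewrite !inE subUset.
apply/and4P/and4P => [[sZF sFsZ -> stF]|[/andP[sZF sNvF] sFsZ -> stF]]; split=> //.
- rewrite sZF; apply/subsetP => w; rewrite inE => /andP[ws adj].
  apply/negPn/negP => wF; have /stableP st := stF.
  have [vsF wsF] : v \in s :\: F /\ w \in s :\: F by rewrite !inE vF wF vs ws.
  by case/orP: adj; apply/negP; apply: st.
- apply/subsetP => x xF; move/subsetP/(_ x xF): sFsZ.
  rewrite !in_setU in_setD in_setU1 => /orP[xs|->]; last by rewrite orbT.
  have xv : x != v by apply: contraNneq vF => <-.
  by rewrite xs (negbTE xv) /=; case: (x \in Nv); rewrite ?orbT.
- by apply: stableS stF; apply/setSD/subsetDl.
- apply/subsetP => x /(subsetP sFsZ); rewrite !in_setU in_setD.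
  by case/or3P=> [/andP[_ ->]|->|/(subsetP (nbhd_sub s v))->]; rewrite ?orbT.
have sub_sF : s :\: F \subset v |: ((s :\: (v |: Nv)) :\: F).
  apply/subsetP => x; rewrite in_setD => /andP[xF xs].
  rewrite in_setU1 !in_setD in_setU1 (negbTE xF) xs andbT /=.
  by case: eqVneq => //= _; apply: contra xF; apply: (subsetP sNvF).
apply: stableS sub_sF _; rewrite stableU1 //; apply/eqP; rewrite -subset0.
apply/subsetP => w; rewrite [w \in nbhd _ _]in_set !in_setD in_setU1.
case/andP=> /and3P[_ /norP[_ wNv] ws] adj.
by move: wNv; rewrite /Nv /nbhd in_set ws adj.
Qed.

Lemma koszul_faces_memU1 s Z m v F : F \in koszul_faces s (v |: Z) m -> v \in F.
Proof. by rewrite inE => /and4P[/subsetP sZF _ _ _]; apply: sZF; apply: setU11. Qed.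

Lemma koszul_faces_notin s Z m v F : v \notin Z -> ~~ edgeb v v ->
  F \in koszul_faces (s :\: (v |: nbhd s v)) (Z :|: nbhd s v) m -> v \notin F.
Proof.
move=> vZ nvv; rewrite inE => /and4P[_ /subsetP sFsZ _ _]; apply/negP => /sFsZ.
by rewrite !in_setU in_setD in_setU1 eqxx (negbTE vZ) /= inE (negbTE nvv) andbF.
Qed.

Lemma koszul_faces_split s Z m v : v \in s -> v \notin Z -> ~~ edgeb v v ->
  koszul_faces s Z m =
  koszul_faces (s :\: (v |: nbhd s v)) (Z :|: nbhd s v) m :|:
  koszul_faces (s :\ v) (v |: Z) m.
Proof.
move=> vs vZ nvv; apply/setP => F; rewrite in_setU.
have [vF|vF] := boolP (v \in F).
  rewrite (@mem_koszul_faces_in s Z m v F vs vF); case: (boolP (F \in _)) => //.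
  by move/(koszul_faces_notin vZ nvv); rewrite vF.
rewrite (@mem_koszul_faces_out s Z m v F vs vZ nvv vF) orbC.
by case: (boolP (F \in _)) => // /koszul_faces_memU1; rewrite (negbTE vF).
Qed.

Lemma reg_bounded_split s v b b' : v \in s -> ~~ edgeb v v ->
  reg_bounded (s :\ v) b -> reg_bounded (s :\: (v |: nbhd s v)) b' -> b'.+1 <= b ->
  reg_bounded s b.
Proof.
move=> vs nvv bdA bdB lebb' Z m dsZ nz.
have vZ : v \notin Z by rewrite (disjointFr dsZ vs).
have := @khdim_leU K V _ _ _ v (fun k => koszul_faces_split k vs vZ nvv)
  (fun k F => @koszul_faces_memU1 _ _ k v F) (fun k F => koszul_faces_notin vZ nvv) m.
set Nv := nbhd s v in bdB *.
have [hA|hA] := eqVneq (khdim K (koszul_faces (s :\ v) (v |: Z)) m) 0; last first.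
  have dA : [disjoint s :\ v & v |: Z].
    rewrite disjoints_subset; apply/subsetP => x; rewrite !inE => /andP[xv xs].
    by rewrite (negbTE xv) (disjointFr dsZ xs).
  by have := bdA _ _ dA hA; rewrite (cardsD1 v s) vs cardsU1 vZ; lia.
rewrite hA add0n => leB.
have hB : khdim K (koszul_faces (s :\: (v |: Nv)) (Z :|: Nv)) m != 0.
  by move: nz leB; lia.
have sNv : Nv \subset s := nbhd_sub s v.
have vNv : v \notin Nv by rewrite inE (negbTE nvv) andbF.
have dB : [disjoint s :\: (v |: Nv) & Z :|: Nv].
  rewrite disjoints_subset; apply/subsetP => x.
  rewrite in_setD in_setU1 => /andP[/norP[_ xN] xs].
  by rewrite in_setC in_setU (negbTE xN) (disjointFr dsZ xs).
have := bdB _ _ dB hB; rewrite cardsDS ?subUset ?sub1set ?vs //.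
rewrite cardsU1 vNv cardsU disjoint_setI0 ?cards0 ?subn0; last first.
  by rewrite (disjointWr sNv) // disjoint_sym.
by have := subset_leq_card sNv; lia.
Qed.

End VertexSplitting.

Section EdgeIdealRegularity.
Variables (K : fieldType) (V : finType) (E : V -> V -> Prop).
Implicit Types (a : {ffun V -> nat}) (F : {set V}).

Lemma koszul_hdimE i a :
  koszul_hdim K E i a = khdim K (fun m => koszul_basis E m a) i.
Proof.
have diffE j : koszul_diff K E j a = koszul_mx K (koszul_basis E j.+1 a) (koszul_basis E j a).
  by apply/matrixP => r c; rewrite !mxE.
by rewrite /koszul_hdim /khdim /koszul_rank; case: i => [|i]; rewrite !diffE.
Qed.

Lemma eq_mono_in_edge_ideal (b1 b2 : V -> nat) :
  (forall x, (0 < b1 x) = (0 < b2 x)) ->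
  mono_in_edge_ideal E b1 = mono_in_edge_ideal E b2.
Proof.
move=> eq12; apply/asboolP/asboolP => -[u [w [euw [pu pw]]]];
  by exists u, w; rewrite ?eq12 // -?eq12.
Qed.

Lemma koszul_hdim_nonsquarefree i a t : 2 <= a t -> koszul_hdim K E i a = 0.
Proof.
move=> at2; rewrite koszul_hdimE (@khdim_cone _ _ _ t) // => [m F|m F tF].
  by rewrite inE => /and3P[/eqP-> _ _].
rewrite !inE cardsU1 tF add1n eqSS subUset sub1set inE (leq_trans _ at2) //=.
congr [&& _, _ & ~~ _]; apply: eq_mono_in_edge_ideal => x.
by rewrite !inE; case: (eqVneq x t) => [->|]; rewrite ?(negbTE tF) /=; lia.
Qed.

Lemma koszul_basis_squarefree m a : (forall v, a v <= 1) ->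
  koszul_basis E m a = koszul_faces E (msupp a) set0 m.
Proof.
move=> a01; apply/setP => F; rewrite !inE sub0set setU0 /=.
have [sFa|] := boolP (F \subset msupp a); rewrite ?andbF //=; congr (_ && _).
apply/idP/stableP => [nmono u w uaF waF|st].
  apply: contra nmono => euw; apply/asboolP; exists u, w; split; first exact/asboolP.
  by move: uaF waF; rewrite !inE => /andP[/negbTE-> ?] /andP[/negbTE-> ?]; rewrite !subn0.
apply/negP => /asboolP[u [w [euw [pu pw]]]].
have inD x : 0 < a x - (x \in F) -> x \in msupp a :\: F.
  by rewrite !inE; have := a01 x; case: (x \in F) => /=; lia.
by move: (st u w (inD u pu) (inD w pw)); rewrite /edgeb => /asboolP.
Qed.

Lemma sum_squarefree a : (forall v, a v <= 1) -> \sum_v a v = #|msupp a|.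
Proof.
move=> a01; rewrite -sum1_card [in RHS]big_mkcond /=; apply: eq_bigr => v _.
by rewrite inE; have := a01 v; case: (a v) => [|[]].
Qed.

Lemma edge_ideal_reg_le_bounded b :
  (forall s : {set V}, reg_bounded K E s b) -> edge_ideal_reg_le K E b.+1.
Proof.
move=> bd i a nz.
have [t at2|a01] := pickP (fun t => 1 < a t).
  by rewrite /edge_ideal_mbetti (koszul_hdim_nonsquarefree _ at2) in nz.
have {}a01 v : a v <= 1 by rewrite leqNgt a01.
have := bd (msupp a) set0 i.+1; rewrite sum_squarefree // cards0 addn0 -addSnnS.
apply; first by rewrite disjoints_subset setC0 subsetT.
move: nz; rewrite /edge_ideal_mbetti koszul_hdimE.
have -> // : (fun m => koszul_basis E m a) = koszul_faces E (msupp a) set0.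
by apply: funext => m; rewrite koszul_basis_squarefree.
Qed.

End EdgeIdealRegularity.

Section WhiskerPath.
Variables (n : nat) (N : {set {set WP_vertex n}}).
Hypothesis matchingN : is_matching (@path_adj n) N.

Section PathCombinatorics.
Local Notation W := (WP_vertex n).
Implicit Types (u w a b : W) (j l t : nat).

Definition pos w : nat := w.1.

Definition matched j : bool :=
  [exists a, exists b, [&& pos a == j, pos b == j.+1, ~~ a.2, ~~ b.2 & [set a; b] \in N]].

Definition matched_run l t : Prop := forall i, i < t -> matched (l + 2 * i).

Definition adj_x u j : bool :=
  if u.2 then pos u == j else ((pos u).+1 == j) || (j.+1 == pos u).

Lemma WP_vertex_eq a b : pos a = pos b -> a.2 = b.2 -> a = b.
Proof. by case: a b => [a1 a2] [b1 b2]; rewrite /pos /= => /val_inj-> ->. Qed.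

Lemma matching_edge_eq (e1 e2 : {set W}) x :
  e1 \in N -> e2 \in N -> x \in e1 -> x \in e2 -> e1 = e2.
Proof.
move=> e1N e2N xe1 xe2; apply/eqP/negPn/negP => ne12.
by have := disjointFr (matchingN.2 _ _ e1N e2N ne12) xe1; rewrite xe2.
Qed.

Lemma matching_edge_path a b : [set a; b] \in N ->
  [/\ a.2 = false, b.2 = false & (pos a).+1 = pos b \/ (pos b).+1 = pos a].
Proof.
case/matchingN.1 => u [w [[u2 [w2 uw]] eab]].
have uw' : (pos u).+1 = pos w \/ (pos w).+1 = pos u := uw.
have neuw : u != w by apply: contraTneq isT => euw; move: uw'; rewrite euw; lia.
have /setU1P[au|/set1P aw] : a \in [set u; w] by rewrite -eab set21.
  have /setU1P[bu|/set1P bw] : b \in [set u; w] by rewrite -eab set22.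
    by have := set22 u w; rewrite -eab au bu setUid in_set1 eq_sym (negbTE neuw).
  by rewrite au bw; split=> //; lia.
have /setU1P[bu|/set1P bw] : b \in [set u; w] by rewrite -eab set22.
  by rewrite aw bu; split=> //; lia.
by have := set21 u w; rewrite -eab aw bw setUid in_set1 (negbTE neuw).
Qed.

Lemma WP_adj_sym a b : WP_adj a b -> WP_adj b a.
Proof.
case=> [[a2 [b2 ab]]|[e12 ne2]]; first by left; do 2!split=> //; case: ab; auto.
by right; split=> // e21; apply: ne2.
Qed.

Lemma WP_adj_x u w : w.2 = false -> WP_adj u w <-> adj_x u (pos w).
Proof.
move=> w2; rewrite /WP_adj /path_adj /adj_x /pos w2; case: u => [i []] /=.
  by split=> [[[]//|[-> _]]|/eqP/val_inj->]; [exact: eqxx | right].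
split=> [[[_ [_ [->|->]]]|[_ []]]|/orP[]/eqP]; rewrite ?eqxx ?orbT //;
  by left; do 2!split=> //; auto.
Qed.

Lemma matchedI a b j : [set a; b] \in N -> pos a = j -> pos b = j.+1 ->
  a.2 = false -> b.2 = false -> matched j.
Proof.
move=> abN aj bj a2 b2; apply/existsP; exists a; apply/existsP; exists b.
by rewrite aj bj a2 b2 !eqxx abN.
Qed.

Lemma matching_step a b a' b' : [set a; b] \in N -> [set a'; b'] \in N ->
  [set a; b] <> [set a'; b'] -> WP_adj b a' ->
  (pos b = pos a + 1 -> pos a' = pos b + 1 /\ pos b' = pos a' + 1) /\
  (pos a = pos b + 1 -> pos b = pos a' + 1 /\ pos a' = pos b' + 1).
Proof.
move=> e1 e2 ne12 adj.
have [a2 b2 ab] := matching_edge_path e1; have [a2' b2' ab'] := matching_edge_path e2.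
have naa : pos a <> pos a'.
  move=> eaa; apply: ne12; apply: (@matching_edge_eq _ _ a) => //; first exact: set21.
  by rewrite (@WP_vertex_eq a a') ?a2 ?a2' // set21.
have nbb : pos b <> pos b'.
  move=> ebb; apply: ne12; apply: (@matching_edge_eq _ _ b) => //; first exact: set22.
  by rewrite (@WP_vertex_eq b b') ?b2 ?b2' // set22.
have /(WP_adj_x _ a2') : WP_adj b a' := adj; rewrite /adj_x b2 => /orP[]/eqP ba'.
all: split=> h; lia.
Qed.

Lemma even_walk_shape r (p : nat -> W) :
  (forall k, k < r -> [set p (2 * k + 1); p (2 * k + 2)] \in N) ->
  (forall k l, k < r -> l < r ->
     [set p (2 * k + 1); p (2 * k + 2)] = [set p (2 * l + 1); p (2 * l + 2)] -> k = l) ->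
  (forall i, i < 2 * r + 1 -> WP_adj (p i) (p i.+1)) ->
  forall k, k < r -> [/\ (p (2 * k + 1)).2 = false, (p (2 * k + 2)).2 = false &
    if pos (p 2) == (pos (p 1)).+1
    then pos (p (2 * k + 1)) = pos (p 1) + 2 * k /\
         pos (p (2 * k + 2)) = pos (p 1) + 2 * k + 1
    else pos (p (2 * k + 1)) + 2 * k = pos (p 1) /\
         pos (p (2 * k + 2)) + 2 * k + 1 = pos (p 1)].
Proof.
move=> inN uniqN adj; elim=> [|k IHk] ltkr.
  have := inN 0 ltkr; rewrite muln0 !add0n => /matching_edge_path[p1 p2 p12].
  by split=> //; case: eqP => /= h; lia.
have [p1 p2 shape_k] := IHk (ltnW ltkr).
have ne : [set p (2 * k + 1); p (2 * k + 2)] <> [set p (2 * k.+1 + 1); p (2 * k.+1 + 2)].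
  by move=> e; have := uniqN k k.+1 (ltnW ltkr) ltkr e; lia.
have adj_k : WP_adj (p (2 * k + 2)) (p (2 * k.+1 + 1)).
  by rewrite (_ : 2 * k.+1 + 1 = (2 * k + 2).+1); [apply: adj; lia | lia].
have [up down] := matching_step (inN k (ltnW ltkr)) (inN k.+1 ltkr) ne adj_k.
have [p1' p2' _] := matching_edge_path (inN k.+1 ltkr).
split=> //; move: shape_k; case: ifP => _ [h1 h2].
  by have := up ltac:(lia); lia.
by have := down ltac:(lia); lia.
Qed.

Lemma matched_lt j : matched j -> j.+1 < n.
Proof. by case/existsP=> a /existsP[b /and5P[_ /eqP <- _ _ _]]; apply: ltn_ord. Qed.

Lemma matched_edge j a b : matched j -> pos a = j -> pos b = j.+1 ->
  a.2 = false -> b.2 = false -> [set a; b] \in N.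
Proof.
case/existsP=> a' /existsP[b' /and5P[/eqP a'j /eqP b'j a2' b2' a'b'N]] aj bj a2 b2.
have -> : a = a' by apply: WP_vertex_eq; rewrite ?aj ?a'j // a2 (negbTE a2').
have -> // : b = b' by apply: WP_vertex_eq; rewrite ?bj ?b'j // b2 (negbTE b2').
Qed.

Definition run_linked u w : Prop := exists l t, [/\ 0 < t, matched_run l t &
  (adj_x u l && adj_x w (l + 2 * t - 1)) || (adj_x u (l + 2 * t - 1) && adj_x w l)].

Lemma even_connected_run u v : even_connected (@WP_adj n) N u v -> run_linked u v.
Proof.
case=> r [p [[r1 p0 pr adj] [inN uniqN]]].
have shape := even_walk_shape inN uniqN adj.
have [x1 _ _] := shape 0 r1.
move: (shape r.-1 ltac:(lia)); rewrite (_ : 2 * r.-1 + 2 = 2 * r); last by lia.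
case=> _ x2r hr.
have /(WP_adj_x _ x1) adj_u1 : WP_adj u (p 1) by rewrite -p0; apply: adj; lia.
have /(WP_adj_x _ x2r) adj_vr : WP_adj v (p (2 * r)).
  by apply: WP_adj_sym; rewrite -pr addn1; apply: adj; lia.
move: shape hr; case: ifP => up shape hr.
  exists (pos (p 1)), r; split=> //; last first.
    by rewrite adj_u1 (_ : _ + 2 * r - 1 = pos (p (2 * r))) ?adj_vr //; lia.
  move=> i ltir; have [x1i x2i [h1 h2]] := shape i ltir.
  by apply: (matchedI (inN i ltir)); rewrite ?h1 ?h2 //; lia.
exists (pos (p (2 * r))), r; split=> //; last first.
  by rewrite adj_vr (_ : _ + 2 * r - 1 = pos (p 1)) ?adj_u1 ?orbT //; lia.
move=> i ltir; have [x1i x2i [h1 h2]] := shape (r - 1 - i) ltac:(lia).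
have := inN (r - 1 - i) ltac:(lia); rewrite setUC => /matchedI; apply=> //; lia.
Qed.

Lemma run_even_connected l t u v : 0 < t -> matched_run l t -> adj_x u l ->
  adj_x v (l + 2 * t - 1) -> u <> v -> even_connected (@WP_adj n) N u v.
Proof.
move=> t0 run adj_u adj_v neuv.
have lt_end : l + 2 * t - 1 < n by have := matched_lt (run t.-1 ltac:(lia)); lia.
pose x j : W := (insubd u.1 j, false).
have pos_x j : j < n -> pos (x j) = j by move=> jn; rewrite /pos /= val_insubd jn.
pose p j := if j == 0 then u else if j == 2 * t + 1 then v else x (l + j - 1).
have p_mid j : 0 < j < 2 * t + 1 -> p j = x (l + j - 1).
  by case/andP=> j0 jt; rewrite /p !ifN //; apply/eqP; lia.
have edge_k k : k < t ->
    [set p (2 * k + 1); p (2 * k + 2)] = [set x (l + 2 * k); x (l + 2 * k + 1)].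
  by move=> kt; rewrite !p_mid; [congr [set x _; x _]; lia | lia | lia].
exists t, p; split; split=> //.
- by rewrite /p ifN ?eqxx //; apply/eqP; lia.
- move=> i it; have [->|i0] := eqVneq i 0.
    rewrite {1}/p eqxx p_mid; last by lia.
    by apply/WP_adj_x => //; rewrite addnK pos_x //; lia.
  have [->|it'] := eqVneq i (2 * t).
    have -> : p (2 * t).+1 = v by rewrite /p addn1 eqxx.
    rewrite p_mid; last by lia.
    by apply: WP_adj_sym; apply/WP_adj_x => //; rewrite pos_x //; lia.
  rewrite !p_mid; try lia.
  left; do 2!split=> //; left.
  by change ((pos (x (l + i - 1))).+1 = pos (x (l + i.+1 - 1))); rewrite !pos_x; lia.
- move=> k kt; rewrite edge_k //.
  by apply: matched_edge (run k kt) _ _ _ _; rewrite ?pos_x //; lia.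
move=> k k' kt k't; rewrite !edge_k // => e.
have : x (l + 2 * k) \in [set x (l + 2 * k'); x (l + 2 * k' + 1)] by rewrite -e set21.
by rewrite !inE => /orP[]/eqP/(congr1 pos); rewrite !pos_x; lia.
Qed.

Lemma matched_supp j w : matched j -> w.2 = false -> pos w = j \/ pos w = j.+1 ->
  w \in suppN N.
Proof.
case/existsP=> a /existsP[b /and5P[/eqP aj /eqP bj /negbTE a2 /negbTE b2 abN]] w2 wj.
apply/bigcupP; exists [set a; b] => //.
by case: wj => wj; [rewrite (@WP_vertex_eq w a) ?set21 | rewrite (@WP_vertex_eq w b) ?set22];
  rewrite ?w2 ?a2 ?b2 //; lia.
Qed.

Lemma matched_nonconsec j : matched j -> ~~ matched j.+1.
Proof.
case/existsP=> a /existsP[b /and5P[/eqP aj /eqP bj /negbTE a2 /negbTE b2 abN]].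
apply/negP => /existsP[a' /existsP[b' /and5P[/eqP a'j /eqP b'j /negbTE a2' _ a'b'N]]].
have ba' : b = a' by apply: WP_vertex_eq; rewrite ?b2 ?a2' //; lia.
have /setP/(_ a) : [set a; b] = [set a'; b'].
  by apply: (@matching_edge_eq _ _ b); rewrite ?set22 // ba' set21.
by rewrite set21 !inE => /esym/orP[]/eqP/(congr1 pos); lia.
Qed.

Lemma maximal_run j : exists t, matched_run j t /\ ~~ matched (j + 2 * t).
Proof.
have : exists t, ~~ matched (j + 2 * t).
  by exists n; apply/negP => /matched_lt; lia.
case/ex_minnP=> t end_t min_t; exists t; split=> // i lt_it.
by apply: contraT => /(min_t i); lia.
Qed.

Definition covered j : bool := matched j || (0 < j) && matched j.-1.

Lemma run_end_uncovered j t : matched_run j t -> ~~ matched (j + 2 * t) -> 0 < t ->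
  ~~ covered (j + 2 * t).
Proof.
move=> run end_t t0; rewrite /covered negb_or end_t /= negb_and.
have := matched_nonconsec (run t.-1 ltac:(lia)).
by rewrite (_ : (j + 2 * t.-1).+1 = (j + 2 * t).-1) ?orbT //; lia.
Qed.

Definition linked u w : Prop := WP_adj u w \/ run_linked u w.

Lemma WP_adj_leaf u w : u.2 = true -> WP_adj u w -> pos w = pos u /\ w.2 = false.
Proof.
move=> u2 [[u2' _]|[uw /eqP ne2]]; first by rewrite u2 in u2'.
by split; [rewrite /pos uw | move: ne2; rewrite u2; case: (w.2)].
Qed.

Lemma free_leaf_link u w : u.2 = true -> ~~ covered (pos u) -> w \notin suppN N ->
  linked u w -> pos w = pos u /\ w.2 = false.
Proof.
move=> u2 free ws [adj|[l [t [t0 run]]]]; first exact: WP_adj_leaf.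
rewrite /adj_x u2 => /orP[]/andP[/eqP ul _]; case/negP: free.
  by rewrite /covered ul; have := run 0 t0; rewrite muln0 addn0 => ->.
rewrite /covered (_ : pos u = (l + 2 * t.-1).+1); last by lia.
by rewrite /= run ?orbT //; lia.
Qed.

Lemma right_end_leaf_link u w : u.2 = true -> 0 < pos u -> matched (pos u).-1 ->
  w \notin suppN N -> linked u w -> pos w < pos u.
Proof.
move=> u2 u0 mu ws [adj|[l [t [t0 run]]]].
  have [wu w2] := WP_adj_leaf u2 adj.
  by case/negP: ws; apply: (matched_supp mu w2); right; lia.
rewrite /adj_x u2 => /orP[]/andP[/eqP ul].
  have := matched_nonconsec mu; rewrite (_ : (pos u).-1.+1 = l); last by lia.
  by have := run 0 t0; rewrite muln0 addn0 => ->.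
case: ifP => w2; first by move/eqP; lia.
case/orP=> /eqP wl; first by lia.
by case/negP: ws; apply: (matched_supp (run 0 t0)) => //; right; lia.
Qed.

Lemma run_leaf_link j0 t0 u w s0 : matched_run j0 t0 -> ~~ matched (j0 + 2 * t0) ->
  u.2 = true -> pos u = j0 + 2 * s0 -> s0 < t0 -> w \notin suppN N -> linked u w ->
  (w.2 = true /\ exists2 s1, s0 <= s1 < t0 & pos w = j0 + 2 * s1 + 1) \/
  (w.2 = false /\ pos w = j0 + 2 * t0).
Proof.
move=> run0 end0 u2 pu s0t0 ws [adj|[l [t [t1 run]]]].
  have [wu w2] := WP_adj_leaf u2 adj.
  by case/negP: ws; apply: (matched_supp (run0 s0 s0t0) w2); left; lia.
rewrite /adj_x u2 => /orP[]/andP[/eqP ul]; last first.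
  have := matched_nonconsec (run t.-1 ltac:(lia)).
  by rewrite (_ : (l + 2 * t.-1).+1 = j0 + 2 * s0) ?run0 //; lia.
have le_t : t <= t0 - s0.
  rewrite leqNgt; apply: contra end0 => lt_t.
  by rewrite (_ : j0 + 2 * t0 = l + 2 * (t0 - s0)) ?run //; lia.
case: ifP => w2.
  by move/eqP=> wl; left; split=> //; exists (s0 + t.-1); lia.
case/orP=> /eqP wl.
  by case/negP: ws; apply: (matched_supp (run t.-1 ltac:(lia))) => //; left; lia.
right; split=> //; case: (ltngtP t (t0 - s0)) => [lt_t||]; try lia.
by case/negP: ws; apply: (matched_supp (run0 (s0 + t) ltac:(lia))) => //; left; lia.
Qed.

Definition nonleft k : nat := \sum_(k <= j < n) ~~ matched j.

Lemma nonleft_rec k : k < n -> nonleft k = ~~ matched k + nonleft k.+1.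
Proof. by move=> lt_kn; rewrite /nonleft big_ltn. Qed.

Lemma nonleft_ge k : n <= k -> nonleft k = 0.
Proof. by move=> le_nk; rewrite /nonleft big_geq. Qed.

Lemma nonleft_le k k' : k <= k' -> nonleft k' <= nonleft k.
Proof.
move=> le_kk'; rewrite -(subnKC le_kk'); elim: (k' - k) => [|d IHd]; first by rewrite addn0.
have [lt_kdn|le_nkd] := ltnP (k + d) n; last by rewrite nonleft_ge //; lia.
by rewrite addnS (leq_trans _ IHd) // (nonleft_rec lt_kdn) leq_addl.
Qed.

Lemma nonleft_run j t : matched_run j t -> nonleft j = t + nonleft (j + 2 * t).
Proof.
elim: t => [|t IHt] run; first by rewrite muln0 addn0.
have end_t := run t (ltnSn t); have := matched_lt end_t => lt_end.
rewrite IHt => [|i lt_it]; last by apply: run; lia.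
rewrite nonleft_rec ?end_t; last by lia.
rewrite nonleft_rec ?(negbTE (matched_nonconsec end_t)) //.
by rewrite (_ : (j + 2 * t).+2 = j + 2 * t.+1) //; lia.
Qed.

Lemma half_nonleft_lt k e : ~~ matched e -> nonleft e < nonleft k ->
  (nonleft e.+1).+1./2 < (nonleft k).+1./2.
Proof.
move=> free_e; have [lt_en|le_ne] := ltnP e n.
  by rewrite (nonleft_rec lt_en) free_e; lia.
by rewrite (nonleft_ge le_ne) (@nonleft_ge e.+1); lia.
Qed.

Lemma card_matching_le : #|N| + nonleft 0 <= n.
Proof.
pose edge (j : 'I_n) : {set W} := [set u | ~~ u.2 & (pos u == j) || (pos u == j.+1)].
have : #|N| <= #|[set j : 'I_n | matched j]|.
  apply: leq_trans (leq_imset_card edge _); apply/subset_leq_card/subsetP => e eN.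
  have [a [b [_ eab]]] := matchingN.1 e eN; rewrite {}eab in eN *.
  wlog ab : a b eN / (pos a).+1 = pos b.
    move=> hwlog; have [a2 b2 [|]] := matching_edge_path eN; first exact: hwlog.
    by rewrite setUC; apply: hwlog; rewrite setUC.
  have [a2 b2 _] := matching_edge_path eN.
  apply/imsetP; exists a.1; first by rewrite inE (matchedI eN).
  apply/setP => u; rewrite !inE -[nat_of_ord a.1]/(pos a) ab.
  apply/idP/idP => [/orP[]/eqP->|/andP[/negbTE u2 /orP[]/eqP pu]].
  - by rewrite a2 eqxx.
  - by rewrite b2 eqxx orbT.
  - by rewrite (@WP_vertex_eq u a) ?eqxx // u2 a2.
  - by rewrite (@WP_vertex_eq u b) ?eqxx ?orbT // u2 b2.
have : #|[set j : 'I_n | matched j]| + nonleft 0 = n.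
  rewrite /nonleft big_mkord -sum1_card big_mkcond -big_split /=.
  rewrite (eq_bigr (fun _ => 1)) => [|j _]; last by rewrite inE; case: matched.
  by rewrite sum1_card card_ord.
lia.
Qed.

End PathCombinatorics.

Section ComplementGraph.
Local Notation V' := (GN_vertex N).
Local Notation E' := (@GN_adj (WP_vertex n) (@WP_adj n) N).
Local Notation gpos x := (pos (val x)).
Local Notation leaf x := (val x).2.
Implicit Types (x y w : V') (s : {set V'}) (j k l t : nat).

Lemma GN_vertex_eq x y : gpos x = gpos y -> leaf x = leaf y -> x = y.
Proof. by move=> exy lxy; apply/val_inj/WP_vertex_eq. Qed.

Lemma GN_edgeb_irr x : ~~ edgeb E' x x.
Proof. by apply/negP => /asboolP[]. Qed.

Lemma GN_adj_of_linked x y : x != y -> linked (val x) (val y) -> edgeb E' x y || edgeb E' y x.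
Proof.
have neq_val u v : u != v -> val u <> val v by move=> /eqP ne /val_inj.
move=> nexy [adj|[l [t [t0 run /orP[]/andP[xl yr]]]]].
- by apply/orP; left; apply/asboolP; split; [exact: neq_val | left].
- apply/orP; left; apply/asboolP; split; [exact: neq_val | right].
  by apply: (run_even_connected t0 run xl yr); apply: neq_val.
- rewrite eq_sym in nexy; apply/orP; right; apply/asboolP; split; [exact: neq_val | right].
  by apply: (run_even_connected t0 run yr xl); apply: neq_val.
Qed.

Lemma linked_of_GN_adj x y : edgeb E' x y || edgeb E' y x -> linked (val x) (val y).
Proof.
move=> /orP[] /asboolP[_ [adj|/even_connected_run link]].
- by left.
- by right.
- by left; apply: WP_adj_sym.
right; case: link => l [t [t0 run adj]]; exists l, t; split=> //.
by rewrite orbC andbC [X in _ || X]andbC.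
Qed.

Lemma GN_adj_run x y l t : 0 < t -> matched_run l t -> adj_x (val x) l ->
  adj_x (val y) (l + 2 * t - 1) -> gpos x != gpos y -> edgeb E' x y || edgeb E' y x.
Proof.
move=> t0 run xl yr nexy; apply: GN_adj_of_linked; last by right; exists l, t; rewrite xl yr.
by apply: contraNneq nexy => ->.
Qed.

Lemma nbhd_eq0 s x : (forall w, w \in s -> linked (val x) (val w) -> False) ->
  nbhd E' s x = set0.
Proof.
move=> nolink; apply/setP => w; rewrite !inE.
by apply/negbTE/andP => -[ws /linked_of_GN_adj]; apply: nolink.
Qed.

Lemma mem_nbhd_compl s v w : w \in s :\: (v |: nbhd E' s v) ->
  [/\ w \in s, w != v & ~~ (edgeb E' v w || edgeb E' w v)].
Proof.
rewrite in_setD in_setU1 negb_or [w \in nbhd _ _ _]inE => /andP[/andP[-> ]].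
by rewrite andbC => /nandP[] // /negbTE-> ws; rewrite ws.
Qed.

Lemma GN_x_unmatched x j : leaf x = false -> matched j -> gpos x <> j /\ gpos x <> j.+1.
Proof.
move=> lx mj; have := valP x; rewrite /= => xs.
by split=> pj; case/negP: xs; apply: (matched_supp mj lx); [left | right].
Qed.

Variable K : fieldType.

Definition bounded_from k : Prop := forall s,
  (forall w, w \in s -> k <= gpos w) -> reg_bounded K E' s (nonleft k).+1./2.

Lemma bounded_from_ge k : n <= k -> bounded_from k.
Proof.
move=> le_nk s s_ge; have -> : s = set0.
  apply/setP => w; rewrite inE; apply/negP => /s_ge.
  by rewrite /pos; have := ltn_ord (val w).1; lia.
exact: reg_bounded_set0.
Qed.

(* A vertex of [s] at a position up to the end [e] of the run is a leaf at a
   left end of the run or the leaf y_e; the hypotheses remove its possible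
   neighbours, so it is isolated. *)
Lemma bounded_after_run j0 t0 s :
  matched_run j0 t0 -> ~~ covered (j0 + 2 * t0) -> bounded_from (j0 + 2 * t0).+1 ->
  (forall w, w \in s -> j0 <= gpos w) ->
  (forall w, w \in s -> leaf w -> forall i, i < t0 -> gpos w <> j0 + 2 * i + 1) ->
  (forall w, w \in s -> ~~ leaf w -> gpos w <> j0 + 2 * t0) ->
  reg_bounded K E' s (nonleft (j0 + 2 * t0).+1).+1./2.
Proof.
set e := j0 + 2 * t0 => run unc_e IH s_ge no_y no_x.
have end_e : ~~ matched e by move: unc_e; rewrite /covered negb_or => /andP[].
have [w /andP[ws le_we]|gt_e] := pickP (fun w => (w \in s) && (gpos w <= e)); last first.
  by apply: IH => w ws; have := gt_e w; rewrite ws /= ltnNge => /negbT.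
apply: (reg_bounded_isolated _ ws); apply: nbhd_eq0 => w' w's link.
have w's' := valP w'; have [lt_we|eq_we] : gpos w < e \/ gpos w = e by lia.
  pose i := (gpos w - j0) %/ 2; have lt_i : i < t0 by have := s_ge w ws; lia.
  have [pw|pw] : gpos w = j0 + 2 * i + 1 \/ gpos w = j0 + 2 * i by have := s_ge w ws; lia.
    case: (boolP (leaf w)) => [lw|/negbTE lw]; first exact: (no_y w ws lw i lt_i).
    by apply: (GN_x_unmatched lw (run i lt_i)).2; lia.
  case: (boolP (leaf w)) => [lw|/negbTE lw]; last exact: (GN_x_unmatched lw (run i lt_i)).1.
  case: (run_leaf_link run end_e lw pw lt_i w's' link) => [[lw' [i' /andP[_ lt_i'] pw']]|[lw' pw']].
    exact: (no_y w' w's lw' i' lt_i').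
  by apply: (no_x w' w's); rewrite ?lw'.
case: (boolP (leaf w)) => [lw|/negbTE lw]; last by apply: (no_x w ws); rewrite ?lw.
have unc_w : ~~ covered (gpos w) by rewrite eq_we.
have [pw' lw'] := free_leaf_link lw unc_w w's' link.
by apply: (no_x w' w's); rewrite ?lw' // pw'.
Qed.

Lemma free_leaf_isolated s y : leaf y -> ~~ covered (gpos y) ->
  (forall w, w \in s -> ~~ leaf w -> gpos w != gpos y) -> nbhd E' s y = set0.
Proof.
move=> ly unc no_x; apply: nbhd_eq0 => w ws /(free_leaf_link ly unc (valP w))[pw /negbT lw].
by have := no_x w ws lw; rewrite pw eqxx.
Qed.

Lemma right_end_leaf_isolated s y : 0 < gpos y -> matched (gpos y).-1 ->
  (forall w, w \in s -> gpos y <= gpos w) -> nbhd E' s y = set0.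
Proof.
move=> y0 my s_ge.
have ly : leaf y by apply/negPn/negP => /negbTE ly; apply: (GN_x_unmatched ly my).2; lia.
apply: nbhd_eq0 => w ws /(right_end_leaf_link ly y0 my (valP w)).
by have := s_ge w ws; lia.
Qed.

Section InductionStep.
Variables (k : nat) (s : {set V'}).
Hypothesis IH : forall k', k < k' -> bounded_from k'.
Hypothesis s_ge : forall w, w \in s -> k <= gpos w.

Lemma bounded_skip : (forall w, w \in s -> gpos w != k) ->
  reg_bounded K E' s (nonleft k).+1./2.
Proof.
move=> s_neq; apply: reg_bounded_le (IH (ltnSn k) _).
  by have := nonleft_le (leqnSn k); lia.
by move=> w ws; rewrite ltn_neqAle eq_sym s_neq ?s_ge.
Qed.

Lemma bounded_matched w0 : matched k -> w0 \in s -> gpos w0 = k ->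
  reg_bounded K E' s (nonleft k).+1./2.
Proof.
move=> mk w0s pw0.
have leaf_k w : gpos w = k -> leaf w.
  by move=> pw; apply/negPn/negP => /negbTE lw; apply: (GN_x_unmatched lw mk).1.
have [t0 [run end0]] := maximal_run k.
have t0_gt0 : 0 < t0 by case: t0 run end0 => // _; rewrite muln0 addn0 mk.
apply: (reg_bounded_split (b' := (nonleft (k + 2 * t0).+1).+1./2) w0s (GN_edgeb_irr w0)).
- apply: reg_bounded_le (IH (ltnSn k) _).
    by rewrite (nonleft_rec (ltnW (matched_lt mk))) mk.
  move=> w; rewrite in_setD1 => /andP[ne ws]; rewrite ltn_neqAle s_ge // andbT.
  by apply: contraNneq ne => pw; apply/eqP/GN_vertex_eq; rewrite ?leaf_k ?pw ?pw0.
- apply: (bounded_after_run run (run_end_uncovered run end0 t0_gt0) (IH _)).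
  + by lia.
  + by move=> w /mem_nbhd_compl[ws _ _]; apply: s_ge.
  + move=> w /mem_nbhd_compl[_ _ nadj] lw i lt_i pw; case/negP: nadj.
    apply: (@GN_adj_run _ _ k i.+1) => //; first by move=> i' lt_i'; apply: run; lia.
    * by rewrite /adj_x leaf_k ?pw0.
    * by rewrite /adj_x lw pw; apply/eqP; lia.
    * by rewrite pw0 pw; apply/eqP; lia.
  + move=> w /mem_nbhd_compl[_ _ nadj] /negbTE lw pw; case/negP: nadj.
    apply: (GN_adj_run t0_gt0 run).
    * by rewrite /adj_x leaf_k ?pw0.
    * by rewrite /adj_x lw pw; apply/orP; right; apply/eqP; lia.
    * by rewrite pw0 pw; apply/eqP; lia.
by apply: half_nonleft_lt; rewrite ?(nonleft_run run) //; lia.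
Qed.

Lemma bounded_delete_x wx : ~~ covered k -> wx \in s -> gpos wx = k -> ~~ leaf wx ->
  reg_bounded K E' (s :\ wx) (nonleft k).+1./2.
Proof.
move=> unc wxs pwx /negbTE lwx.
have [wy /andP[wys /eqP pwy]|none] := pickP (fun w => (w \in s :\ wx) && (gpos w == k)).
  have [nwy wys'] := setD1P wys.
  have x_k w : gpos w = k -> ~~ leaf w -> w = wx.
    by move=> pw /negbTE lw; apply: GN_vertex_eq; rewrite ?pw ?lw.
  have lwy : leaf wy by apply/negPn/negP => /(x_k _ pwy) ewy; rewrite ewy eqxx in nwy.
  apply: (reg_bounded_isolated _ wys); apply: free_leaf_isolated; rewrite ?pwy //.
  by move=> w /setD1P[nw ws] lw; apply: contra nw => /eqP pw; rewrite (x_k w).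
apply: reg_bounded_le (IH (ltnSn k) _); first by have := nonleft_le (leqnSn k); lia.
move=> w ws; rewrite ltn_neqAle s_ge ?andbT; last by move: ws => /setD1P[].
by have := none w; rewrite ws eq_sym => /negbT.
Qed.

Lemma bounded_free_x wx : ~~ covered k -> wx \in s -> gpos wx = k -> ~~ leaf wx ->
  reg_bounded K E' s (nonleft k).+1./2.
Proof.
move=> unc wxs pwx /negbTE lwx.
have nmk : ~~ matched k by move: unc; rewrite /covered negb_or => /andP[].
have x_k w : w \in s -> gpos w = k -> ~~ leaf w -> w = wx.
  by move=> ws pw /negbTE lw; apply: GN_vertex_eq; rewrite ?pw ?lw.
have [t0 [run end0]] := maximal_run k.+1.
apply: (reg_bounded_split (b' := (nonleft (k.+1 + 2 * t0).+1).+1./2) wxs (GN_edgeb_irr wx)).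
- by apply: bounded_delete_x; rewrite ?lwx.
- apply: (bounded_after_run run _ (IH _)); last 3 first.
  + move=> w /mem_nbhd_compl[ws nw nadj]; rewrite ltn_neqAle s_ge ?andbT //.
    apply/eqP => /esym pw; case: (boolP (leaf w)) => lw; last by rewrite (x_k w) ?eqxx in nw.
    case/negP: nadj; apply: GN_adj_of_linked; first by rewrite eq_sym.
    left; right; split; last by rewrite lwx lw.
    by apply: val_inj; change (pos (val wx) = pos (val w)); rewrite pw pwx.
  + move=> w /mem_nbhd_compl[_ _ nadj] lw i lt_i pw; case/negP: nadj.
    apply: (@GN_adj_run _ _ k.+1 i.+1) => //; first by move=> i' lt_i'; apply: run; lia.
    * by rewrite /adj_x lwx pwx eqxx.
    * by rewrite /adj_x lw pw; apply/eqP; lia.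
    * by rewrite pwx pw; apply/eqP; lia.
  + move=> w /mem_nbhd_compl[_ _ nadj] /negbTE lw pw; case/negP: nadj.
    have [t00|t0_gt0] := posnP t0.
      apply: GN_adj_of_linked; first by apply: contraTneq isT => ewx; move: pw; rewrite -ewx; lia.
      left; left; do 2!split=> //; left; change ((pos (val wx)).+1 = pos (val w)).
      by rewrite pw pwx t00 muln0 addn0.
    apply: (GN_adj_run t0_gt0 run); rewrite ?pwx ?pw.
    * by rewrite /adj_x lwx pwx eqxx.
    * by rewrite /adj_x lw pw; apply/orP; right; apply/eqP; lia.
    * by apply/eqP; lia.
  + have [t00|t0_gt0] := posnP t0; last exact: run_end_uncovered.
    by move: end0; rewrite t00 muln0 addn0 /covered negb_or => -> /=.
  + by lia.
apply: half_nonleft_lt => //.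
have lt_kn : k < n by rewrite -pwx /pos ltn_ord.
by rewrite (nonleft_rec lt_kn) nmk (nonleft_run run) /=; lia.
Qed.

End InductionStep.

Lemma bounded_from0 : bounded_from 0.
Proof.
suff bd m k : n - k <= m -> bounded_from k by apply: (bd n); rewrite subn0.
elim: m k => [|m IHm] k le_nk; first by apply: bounded_from_ge; lia.
have [lt_kn|] := ltnP k n; last exact: bounded_from_ge.
have IH k' : k < k' -> bounded_from k' by move=> lt_kk'; apply: IHm; lia.
move=> s s_ge.
have [w0 /andP[w0s /eqP pw0]|none] := pickP (fun w => (w \in s) && (gpos w == k)).
  have [mk|nmk] := boolP (matched k); first exact: (bounded_matched IH s_ge mk w0s).
  have [/andP[k_gt0 mk1]|nmk1] := boolP ((0 < k) && matched k.-1).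
    apply: (reg_bounded_isolated _ w0s); apply: right_end_leaf_isolated; rewrite ?pw0 //.
  have unc : ~~ covered k by rewrite /covered negb_or nmk.
  have [wx /and3P[wxs /eqP pwx lwx]|nox] :=
    pickP (fun w => [&& w \in s, gpos w == k & ~~ leaf w]).
    exact: (bounded_free_x IH s_ge unc wxs pwx lwx).
  have lw0 : leaf w0 by apply/negPn/negP => lw0; have := nox w0; rewrite w0s pw0 eqxx lw0.
  apply: (reg_bounded_isolated _ w0s); apply: free_leaf_isolated; rewrite ?pw0 //.
  by move=> w ws lw; apply/eqP => pw; have := nox w; rewrite ws pw eqxx lw.
by apply: bounded_skip => // w ws; have := none w; rewrite ws => /negbT.
Qed.

End ComplementGraph.

End WhiskerPath.

Theorem lemma3p7 (K : fieldType) (n q : nat) (N : {set {set WP_vertex n}}) :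
  (2 <= n)%N -> (2 <= q)%N -> (q <= n %/ 2 + 1)%N ->
  is_matching (@path_adj n) N -> #|N| = q.-1 ->
  edge_ideal_reg_le K (@GN_adj (WP_vertex n) (@WP_adj n) N)
    (2 + (n - q) %/ 2).
Proof.
(* The numeric hypotheses only make such a matching possible; the bound uses
   [#|N|] alone. *)
move=> _ _ _ matchingN cardN.
have := card_matching_le matchingN; rewrite cardN => cover.
rewrite (_ : 2 + (n - q) %/ 2 = (1 + (n - q) %/ 2).+1); last by lia.
apply: edge_ideal_reg_le_bounded => s.
apply: reg_bounded_le (bounded_from0 matchingN (fun _ _ => leq0n _)); lia.
Qed.
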